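(* Let $d,N\ge 1$, let $V$ be a real invertible $d\times d$ matrix, let $\Lambda_{ni}\in\mathbb R$ ($n=1,\dots,N$, $i=1,\dots,d$), and set $M_n=V\,{\rm diag}(\Lambda_{n1},\dots,\Lambda_{nd})\,V^{-1}$ for $n=1,\dots,N$; let $\mathcal M_\circ=\{M_n\}_{n=1}^N$. Suppose that for every $i\neq i'$ in $\{1,\dots,d\}$ there exists $n\in\{1,\dots,N\}$ with $\Lambda_{ni}\neq\Lambda_{ni'}$. Then $\mathcal M_\circ$ admits exactly $2^d d!$ exact joint triangularizers.
   Context: All matrices are real. For a $d\times d$ matrix $A$, ${\rm low}(A)$ is its strictly lower-triangular part: $[{\rm low}(A)]_{ij}=A_{ij}$ if $i>j$ and $0$ otherwise. $\mathbb O(d)$ is the set of $d\times d$ orthogonal matrices. An exact joint triangularizer of $\mathcal M_\circ$ is a matrix $U_\circ\in\mathbb O(d)$ with ${\rm low}(U_\circ^TM_nU_\circ)=0$ for all $n=1,\dots,N$. *)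

From HB Require Import structures.
From mathcomp Require Import all_boot all_order all_algebra.
From mathcomp Require Import reals.
Set Implicit Arguments. Unset Strict Implicit. Unset Printing Implicit Defensive.
Import Order.TTheory GRing.Theory Num.Theory.
Local Open Scope ring_scope.

Definition low {R : pzRingType} {d : nat} (A : 'M[R]_d) : 'M[R]_d :=
  \matrix_(i < d, j < d) (if (j < i)%N then A i j else 0).

Definition orthogonal_mx {R : pzRingType} {d : nat} (U : 'M[R]_d) : Prop :=
  U^T *m U = 1%:M.

Definition joint_triangularizer {R : pzRingType} {d N : nat}
    (M : 'I_N -> 'M[R]_d) (U : 'M[R]_d) : Prop :=
  orthogonal_mx U /\ forall n : 'I_N, low (U^T *m M n *m U) = 0.

Definition diag_family {R : comUnitRingType} {d N : nat}
    (V : 'M[R]_d) (Lambda : 'I_N -> 'I_d -> R) (n : 'I_N) : 'M[R]_d :=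
  V *m diag_mx (\row_(i < d) Lambda n i) *m invmx V.

From HB Require Import structures.
From mathcomp Require Import all_boot all_order all_algebra all_fingroup.
From mathcomp Require Import reals ring.
Import Order.TTheory GRing.Theory Num.Theory.
Local Open Scope ring_scope.
Set Implicit Arguments. Unset Strict Implicit. Unset Printing Implicit Defensive.

(* Let D_n = diag(Lambda_n1, ..., Lambda_nd).  For an orthogonal U the
   transpose of U^T M_n U is Q D_n Q^-1 with Q = U^T V^-T, so U is a joint
   triangularizer iff every Q D_n Q^-1 is lower triangular.  The rows of Q then
   span a flag of subspaces stable under all D_n, and since the D_n separate the
   coordinates, each stable subspace is spanned by the coordinate vectors it
   contains; hence the flag is a coordinate flag, i.e. Q Pi is lower triangular
   for a unique permutation matrix Pi.  Conversely every such Q works.  For a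
   fixed Pi, Gram-Schmidt gives one orthogonal U with U^T V^-T Pi lower
   triangular, and any other differs from it by a diagonal matrix of signs,
   because an orthogonal triangular matrix is diagonal with entries +-1.  This
   parametrizes the joint triangularizers by d! permutations and 2^d signs. *)

Lemma is_trig_mxM (R : pzSemiRingType) m n p (A : 'M[R]_(m, n)) (B : 'M[R]_(n, p)) :
  is_trig_mx A -> is_trig_mx B -> is_trig_mx (A *m B).
Proof.
move=> /is_trig_mxP A0 /is_trig_mxP B0; apply/is_trig_mxP => i j lt_ij.
rewrite mxE big1 // => k _; have [/A0 -> | le_ki] := ltnP i k; first by rewrite mul0r.
by rewrite B0 ?mulr0 // (leq_ltn_trans le_ki lt_ij).
Qed.

Lemma is_trig_invmx (F : fieldType) n (A : 'M[F]_n) :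
  is_trig_mx A -> is_trig_mx (invmx A).
Proof.
move=> trigA; have [uA | /negPf nuA] := boolP (A \in unitmx); last by rewrite /invmx nuA.
have diagA i : A i i != 0.
  by move: uA; rewrite unitmxE (det_trig trigA) unitfE => /prodf_neq0; apply.
move/is_trig_mxP: trigA => A0; apply/is_trig_mxP.
suff B0 m (i j : 'I_n) : (i < m)%N -> (i < j)%N -> invmx A i j = 0.
  by move=> i j; apply: B0.
elim: m i j => // m IHm i j.
rewrite ltnS leq_eqVlt => /predU1P[eq_im | lt_im] lt_ij; last exact: IHm.
have /matrixP/(_ i j) := mulmxV uA; rewrite !mxE (bigD1 i) //= big1.
  rewrite addr0 -val_eqE (ltn_eqF lt_ij) => /eqP.
  by rewrite mulf_eq0 (negPf (diagA i)) => /eqP.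
move=> k neq_ki; have [lt_ki | lt_ik | /val_inj eq_ki] := ltngtP k i.
- by rewrite IHm ?mulr0 // -?eq_im // (ltn_trans lt_ki lt_ij).
- by rewrite A0 ?mul0r.
- by rewrite eq_ki eqxx in neq_ki.
Qed.

Lemma pid_mx_diag (R : pzSemiRingType) n k :
  pid_mx k = diag_mx (\row_(i < n) (i < k)%:R) :> 'M[R]_n.
Proof.
apply/matrixP => i j; rewrite !mxE -val_eqE /=.
by case: eqVneq => [-> | _]; rewrite ?andbF // andbT mulr1n.
Qed.

Lemma stablemx_pid_trig (F : fieldType) n k (T : 'M[F]_n) :
  is_trig_mx T -> stablemx (pid_mx k : 'M_n) T.
Proof.
move=> /is_trig_mxP T0; set P : 'M_n := pid_mx k.
suff -> : P *m T = P *m T *m P by apply: submxMl.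
apply/matrixP => i j; rewrite /P !pid_mx_diag mul_mx_diag mul_diag_mx !mxE.
have [_ | le_kj] := ltnP j k; first by rewrite mulr1.
have [lt_ik | _] := ltnP i k; last by rewrite !mul0r.
by rewrite T0 ?mulr0 // (leq_trans lt_ik le_kj).
Qed.

Lemma trig_perm_mx_eq1 (R : nzRingType) n (s : 'S_n) :
  is_trig_mx (perm_mx s : 'M[R]_n) -> s = 1%g.
Proof.
move=> /is_trig_mxP s0.
have le_s i : (s i <= i)%N.
  rewrite leqNgt; apply/negP => /(s0 i (s i))/eqP.
  by rewrite /perm_mx !mxE eqxx oner_eq0.
have : (\sum_(i < n) (i - s i) == 0)%N by rewrite sumnB // (reindex_perm s) subnn.
rewrite sum_nat_eq0 => /forall_inP ge_s; apply/permP => i; apply/val_inj/eqP.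
by rewrite perm1 eqn_leq le_s -subn_eq0 ge_s.
Qed.

Lemma trig_mulmx_perm_inj (F : fieldType) n (B : 'M[F]_n) (s t : 'S_n) :
  B \in unitmx -> is_trig_mx (B *m perm_mx s) -> is_trig_mx (B *m perm_mx t) -> s = t.
Proof.
move=> uB trig_s trig_t; have uBs : B *m perm_mx s \in unitmx.
  by rewrite unitmx_mul uB unitmx_perm.
suff /trig_perm_mx_eq1 /(congr1 (mulg s)) : is_trig_mx (perm_mx (s^-1 * t)%g : 'M[F]_n).
  by rewrite mulKVg mulg1.
rewrite -[perm_mx _](mulKmx uBs) -mulmxA -perm_mxM mulKVg.
by rewrite is_trig_mxM ?is_trig_invmx.
Qed.

Lemma is_diag_conj_perm (R : pzSemiRingType) n (s : 'S_n) (x : 'rV[R]_n) :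
  is_diag_mx (perm_mx s^-1 *m diag_mx x *m perm_mx s).
Proof.
apply/is_diag_mxP => i j neq_ij.
rewrite -row_permE -[s in perm_mx s]invgK -col_permE !mxE (inj_eq perm_inj).
by rewrite [_ == _](negPf neq_ij).
Qed.

Lemma perm_trig_conj_diag (F : fieldType) n (Q : 'M[F]_n) (s : 'S_n) (x : 'rV[F]_n) :
  Q \in unitmx -> is_trig_mx (Q *m perm_mx s) ->
  is_trig_mx (Q *m diag_mx x *m invmx Q).
Proof.
move=> uQ trigQs; set B := Q *m perm_mx s.
have uB : B \in unitmx by rewrite unitmx_mul uQ unitmx_perm.
have -> : Q *m diag_mx x *m invmx Q
    = B *m (perm_mx s^-1 *m diag_mx x *m perm_mx s) *m invmx B.
  apply: (canRL (mulmxK uB)); rewrite /B !mulmxA mulmxKV //.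
  by rewrite -(mulmxA Q (perm_mx s)) -perm_mxM mulgV perm_mx1 mulmx1.
apply: is_trig_mxM; last exact: is_trig_invmx.
by apply: is_trig_mxM => //; apply/is_diag_mx_is_trig/is_diag_conj_perm.
Qed.

Section SeparatingDiagonalFamily.
Variables (F : fieldType) (n N : nat) (Lambda : 'I_N -> 'rV[F]_n).
Hypothesis Lambda_sep :
  forall i j : 'I_n, i != j -> exists k, Lambda k 0 i != Lambda k 0 j.
Local Notation D k := (diag_mx (Lambda k)).

Lemma diag_stable_delta m (W : 'M[F]_(m, n)) (u : 'rV[F]_n) i :
  (forall k, stablemx W (D k)) -> (u <= W)%MS -> u 0 i != 0 ->
  ((delta_mx 0 i : 'rV_n) <= W)%MS.
Proof.
(* Multiplying u by D k - Lambda k 0 j kills coordinate j and keeps coordinate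
   i when k separates them; doing this for every j != i isolates e_i. *)
move=> stW uW ui; pose X x := (u *m diag_mx x <= W)%MS.
have X_sep x k j : X x -> X (\row_l (x 0 l * (Lambda k 0 l - Lambda k 0 j))).
  rewrite /X => xW.
  have -> : u *m diag_mx (\row_l (x 0 l * (Lambda k 0 l - Lambda k 0 j)))
      = u *m diag_mx x *m D k + (- Lambda k 0 j) *: (u *m diag_mx x).
    by apply/rowP => l; rewrite !mul_mx_diag !mxE; ring.
  by rewrite addmx_sub ?scalemx_sub // (submx_trans (submxMr _ xW)).
have [x [Xx xi xj]] : exists x, [/\ X x, x 0 i != 0 & forall j, j != i -> x 0 j = 0].
  suff [x [Xx xi xs]] : exists x, [/\ X x, x 0 i != 0 &
      {in [seq j <- enum 'I_n | j != i], forall j, x 0 j = 0}].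
    by exists x; split=> // j ji; rewrite xs // mem_filter ji mem_enum.
  elim: (enum _) => [|j s [x [Xx xi xs]]].
    exists (const_mx 1); split=> //; last by rewrite mxE oner_eq0.
    by rewrite /X diag_const_mx mulmx1.
  rewrite /=; case: ifP => [ji | _]; last by exists x.
  have [k sep] := Lambda_sep ji.
  exists (\row_l (x 0 l * (Lambda k 0 l - Lambda k 0 j))); split; first exact: X_sep.
    by rewrite mxE mulf_neq0 // subr_eq0 eq_sym.
  by move=> l; rewrite inE mxE => /predU1P[-> | /xs ->]; rewrite ?subrr ?mulr0 ?mul0r.
have -> : delta_mx 0 i = (u 0 i * x 0 i)^-1 *: (u *m diag_mx x).
  apply/rowP => l; rewrite mul_mx_diag !mxE eqxx /=.
  have [-> | li] := eqVneq l i; first by rewrite mulVf // mulf_neq0.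
  by rewrite (xj l li) !mulr0.
exact: scalemx_sub.
Qed.

Lemma diag_stable_sub m m' (W : 'M[F]_(m, n)) (W' : 'M[F]_(m', n)) :
  (forall k, stablemx W (D k)) ->
  (forall i, ((delta_mx 0 i : 'rV_n) <= W)%MS -> ((delta_mx 0 i : 'rV_n) <= W')%MS) ->
  (W <= W')%MS.
Proof.
move=> stW subW; apply/row_subP => r; rewrite [row r W]row_sum_delta.
apply/summx_sub => i _; have [-> | ri] := eqVneq (row r W 0 i) 0.
  by rewrite scale0r sub0mx.
by rewrite scalemx_sub // subW // (diag_stable_delta stW (row_sub r W) ri).
Qed.

Lemma trig_conj_diag_perm (Q : 'M[F]_n) : Q \in unitmx ->
  (forall k, is_trig_mx (Q *m D k *m invmx Q)) ->
  exists s : 'S_n, is_trig_mx (Q *m perm_mx s).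
Proof.
(* W k, spanned by the first k rows of Q, is stable under every D l, hence
   spanned by coordinate vectors; sigma k is the coordinate that W k.+1 adds. *)
move=> uQ trigQ; pose W k : 'M_n := pid_mx k *m Q.
have W_stable k l : stablemx (W k) (D l).
  by rewrite /W -mulmxA -[Q *m D l](mulmxKV uQ) mulmxA submxMr ?stablemx_pid_trig.
have rank_W k : (k <= n)%N -> \rank (W k) = k.
  by move=> le_kn; rewrite mxrankMfree ?row_free_unit // rank_pid_mx.
have W_mono k k' : (k <= k')%N -> (W k <= W k')%MS.
  move=> le_kk'; rewrite /W -[pid_mx k]pid_mx_minh -(minn_idPl le_kk') -mul_pid_mx.
  by rewrite -mulmxA submxMl.
pose C k := [set i | ((delta_mx 0 i : 'rV_n) <= W k)%MS].
have C_grow (k : 'I_n) : exists i, i \in C k.+1 :\: C k.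
  apply/set0Pn; rewrite setD_eq0; apply/negP => /subsetP subC.
  have : (W k.+1 <= W k)%MS.
    by apply: diag_stable_sub => // i; move/(_ i): subC; rewrite !inE.
  by move/mxrankS; rewrite !rank_W ?ltnn // ltnW.
have [sigma sigmaP] := fin_all_exists C_grow.
have sigma_new j : ~~ ((delta_mx 0 (sigma j) : 'rV_n) <= W j)%MS.
  by have := sigmaP j; rewrite !inE => /andP[].
have sigma_inj : injective sigma.
  suff lt_neq (k k' : 'I_n) : (k < k')%N -> sigma k != sigma k'.
    move=> k k' eq_sigma; apply/val_inj.
    by case: (ltngtP k k') => [/lt_neq | /lt_neq | //]; rewrite eq_sigma eqxx.
  move=> lt_kk'; apply: contraNneq (sigma_new k') => <-.
  by apply: submx_trans (W_mono _ _ lt_kk'); have := sigmaP k; rewrite !inE => /andP[].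
exists (perm sigma_inj)^-1%g; apply/is_trig_mxP => k j lt_kj.
rewrite -col_permE mxE permE; apply/eqP; apply: contraNT (sigma_new j) => Qkj.
have kQ_W : (row k Q <= W j)%MS.
  have -> : row k Q = row k (W j).
    by rewrite row_mul pid_mx_diag row_diag_mx mxE lt_kj scale1r -rowE.
  exact: row_sub.
by apply: (diag_stable_delta (W_stable j) kQ_W); rewrite mxE.
Qed.

End SeparatingDiagonalFamily.

Lemma rv_dot_gt0 (R : realDomainType) n (a : 'rV[R]_n) : a != 0 -> 0 < (a *m a^T) 0 0.
Proof.
move=> a_neq0; have -> : (a *m a^T) 0 0 = \sum_j a 0 j ^+ 2.
  by rewrite mxE; apply: eq_bigr => j _; rewrite mxE expr2.
rewrite lt_def sumr_ge0 ?andbT => [|j _]; last exact: sqr_ge0.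
rewrite psumr_neq0 => [|j _]; last exact: sqr_ge0.
case/rV0Pn: a_neq0 => j aj; apply/hasP; exists j; rewrite ?mem_index_enum //=.
by rewrite lt0r sqrf_eq0 aj sqr_ge0.
Qed.

Lemma LQ_decomposition (R : rcfType) m n (A : 'M[R]_(m, n)) : row_free A ->
  exists (L : 'M[R]_m) (O : 'M[R]_(m, n)),
    [/\ is_trig_mx L, O *m O^T = 1%:M & A = L *m O].
Proof.
elim: m A => [|m IHm] A freeA.
  by exists 0, 0; rewrite mx0_is_trig [A]flatmx0 mul0mx; split=> //; rewrite !flatmx0.
have [a [A' defA]] : exists (a : 'rV_n) (A' : 'M_(m, n)), A = col_mx a A'.
  by exists (usubmx (A : 'M_(1 + m, n))), (dsubmx (A : 'M_(1 + m, n))); rewrite vsubmxK.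
rewrite {A}defA in freeA *; have [B AB] := row_freeP freeA.
have [aB A'B] : a *m B = row_mx (1%:M : 'M_1) 0 /\ A' *m B = row_mx (0 : 'M_(m, 1)) 1%:M.
  by apply/eq_col_mx; rewrite -mul_col_mx AB (scalar_mx_block 1 m) block_mxEv.
have a_neq0 : a != 0.
  apply/eqP => a0; have := congr1 (@lsubmx R 1 1 m) aB; rewrite a0 mul0mx row_mxKl.
  by move/matrixP/(_ 0 0)/eqP; rewrite !mxE eq_sym oner_eq0.
set r := Num.sqrt ((a *m a^T) 0 0); have r_gt0 : 0 < r by rewrite sqrtr_gt0 rv_dot_gt0.
(* Gram-Schmidt: o is the normalized first row and A'' the other rows projected
   onto the orthogonal of o, which are orthonormalized recursively. *)
set o := r^-1 *: a; set c := A' *m o^T; set A'' := A' - c *m o.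
have aa : a *m a^T = (r ^+ 2)%:M.
  by rewrite sqr_sqrtr ?ltW ?rv_dot_gt0 // -mx11_scalar.
have oo : o *m o^T = 1%:M.
  rewrite /o linearZ /= -scalemxAl -scalemxAr aa scalerA scale_scalar_mx.
  by rewrite -expr2 -exprMn mulVf ?expr1n // lt0r_neq0.
set B' := rsubmx (B : 'M_(n, 1 + m)).
have oB' : o *m B' = 0 by rewrite -scalemxAl mulmx_rsub aB row_mxKr scaler0.
have A''B' : A'' *m B' = 1%:M.
  by rewrite mulmxBl -mulmxA oB' mulmx0 subr0 mulmx_rsub A'B row_mxKr.
have freeA'' : row_free A'' by apply/row_freeP; exists B'.
have [L' [O' [trigL' O'O' defA'']]] := IHm A'' freeA''.
have [uL' _] : L' \in unitmx /\ O' *m B' \in unitmx.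
  by apply: mulmx1_unit; rewrite mulmxA -defA''.
have O'o : O' *m o^T = 0.
  apply: (can_inj (mulKmx uL')); rewrite mulmx0 mulmxA -defA''.
  by rewrite mulmxBl -mulmxA oo mulmx1 subrr.
(* Restate the goal at type 1 + m (convertible to m.+1) so the block lemmas apply. *)
suff : exists (L : 'M_(1 + m)) (O : 'M_(1 + m, n)),
    [/\ is_trig_mx L, O *m O^T = 1%:M & col_mx a A' = L *m O] by [].
exists (block_mx r%:M 0 c L'), (col_mx o O'); split.
- by rewrite is_trig_block_mx // eqxx mx11_is_trig.
- rewrite tr_col_mx mul_col_row oo O'O' O'o -[o *m O'^T]trmxK trmx_mul trmxK O'o.
  by rewrite trmx0 -scalar_mx_block.
- rewrite mul_block_col mul0mx addr0 mul_scalar_mx /o scalerA mulfV ?lt0r_neq0 //.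
  by rewrite scale1r -defA'' addrC subrK.
Qed.

Definition sign_mx (R : pzRingType) n (sg : {ffun 'I_n -> bool}) : 'M[R]_n :=
  diag_mx (\row_i (-1) ^+ sg i).
Arguments sign_mx {R n}.

Lemma tr_sign_mx (R : pzRingType) n (sg : {ffun 'I_n -> bool}) :
  (sign_mx sg : 'M[R]_n)^T = sign_mx sg.
Proof. exact: tr_diag_mx. Qed.

Lemma sign_mx_orthogonal (R : pzRingType) n (sg : {ffun 'I_n -> bool}) :
  orthogonal_mx (sign_mx sg : 'M[R]_n).
Proof.
rewrite /orthogonal_mx tr_sign_mx mulmx_diag -diag_const_mx; congr diag_mx.
by apply/rowP => i; rewrite !mxE -expr2 sqrr_sign.
Qed.

Lemma sign_mx_inj (R : numDomainType) n : injective (@sign_mx R n).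
Proof.
move=> sg sg' /matrixP eq_sg; apply/ffunP => i.
by have := eq_sg i i; rewrite !mxE eqxx !mulr1n => /signr_inj.
Qed.

Lemma orthogonal_trig_sign (R : realFieldType) n (S : 'M[R]_n) :
  orthogonal_mx S -> is_trig_mx S -> S = sign_mx [ffun i => S i i < 0].
Proof.
rewrite /orthogonal_mx => SS trigS; have [_ uS] := mulmx1_unit SS.
have invS : invmx S = S^T by rewrite -[S^T]mulmx1 -(mulmxV uS) mulmxA SS mul1mx.
have /diag_mxP[x defS] : is_diag_mx S by rewrite is_diag_mxEtrig trigS -invS is_trig_invmx.
rewrite {}defS tr_diag_mx mulmx_diag in SS *; congr diag_mx; apply/rowP => i.
have /eqP : x 0 i ^+ 2 = 1 by move/matrixP/(_ i i): SS; rewrite !mxE eqxx expr2.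
rewrite sqr_norm_eq1 !mxE ffunE mxE eqxx mulr1n => /eqP norm_x.
by rewrite {1}[x 0 i]numEsign norm_x mulr1.
Qed.

Lemma orthogonal_trig_exists (R : rcfType) n (X : 'M[R]_n) : X \in unitmx ->
  exists U, orthogonal_mx U /\ is_trig_mx (U^T *m X).
Proof.
move=> uX; have freeX' : row_free (invmx X) by rewrite row_free_unit unitmx_inv.
have [L [O [trigL OO defX']]] := LQ_decomposition freeX'.
have [uL _] : L \in unitmx /\ O *m X \in unitmx.
  by apply: mulmx1_unit; rewrite mulmxA -defX' mulVmx.
exists O^T; rewrite /orthogonal_mx trmxK; split=> //.
have -> : O *m X = invmx L.
  by apply: (can_inj (mulKmx uL)); rewrite mulmxA -defX' mulVmx // mulmxV.
exact: is_trig_invmx.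
Qed.

Lemma orthogonal_trig_signP (R : realFieldType) n (X U : 'M[R]_n) :
  X \in unitmx -> orthogonal_mx U -> is_trig_mx (U^T *m X) ->
  forall U', orthogonal_mx U' /\ is_trig_mx (U'^T *m X) <->
             exists sg, U' = U *m sign_mx sg.
Proof.
rewrite /orthogonal_mx => uX UU trigU U'; split=> [[U'U' trigU'] | [sg ->]]; last first.
  split; last by rewrite trmx_mul tr_sign_mx -mulmxA is_trig_mxM ?diag_mx_is_trig.
  by rewrite trmx_mul -mulmxA (mulmxA U^T) UU mul1mx sign_mx_orthogonal.
have [_ uU] := mulmx1_unit UU.
have uUX : U^T *m X \in unitmx by rewrite unitmx_mul unitmx_tr uU.
have S_trig : is_trig_mx (U'^T *m U).
  have -> : U'^T *m U = U'^T *m X *m invmx (U^T *m X).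
    by apply: (canRL (mulmxK uUX)); rewrite -!mulmxA (mulmxA U) (mulmx1C UU) mul1mx.
  by rewrite is_trig_mxM ?is_trig_invmx.
have S_orth : orthogonal_mx (U'^T *m U).
  by rewrite /orthogonal_mx trmx_mul trmxK mulmxA -(mulmxA U^T) (mulmx1C U'U') mulmx1.
exists [ffun i => (U'^T *m U) i i < 0].
rewrite -tr_sign_mx -(orthogonal_trig_sign S_orth S_trig) trmx_mul trmxK.
by rewrite mulmxA (mulmx1C UU) mul1mx.
Qed.

Lemma lowP (R : pzRingType) n (A : 'M[R]_n) : reflect (low A = 0) (is_trig_mx A^T).
Proof.
apply: (iffP is_trig_mxP) => [A0 | /matrixP lowA i j lt_ij].
  by apply/matrixP => i j; rewrite !mxE; case: ifP => // /A0; rewrite mxE.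
by have := lowA j i; rewrite !mxE lt_ij.
Qed.

Section JointTriangularizers.
Variables (R : rcfType) (d N : nat) (V : 'M[R]_d) (Lambda : 'I_N -> 'I_d -> R).
Hypothesis uV : V \in unitmx.
Hypothesis Lambda_sep :
  forall i j : 'I_d, i != j -> exists k, Lambda k i != Lambda k j.
Local Notation M := (diag_family V Lambda).

Lemma tr_conj_diag_family (U : 'M[R]_d) k : orthogonal_mx U ->
  (U^T *m M k *m U)^T =
  U^T *m (invmx V)^T *m diag_mx (\row_i Lambda k i) *m invmx (U^T *m (invmx V)^T).
Proof.
move=> UU; set Q := U^T *m (invmx V)^T.
have QVU : Q *m (V^T *m U) = 1%:M.
  by rewrite /Q mulmxA -(mulmxA U^T) -trmx_mul mulmxV // trmx1 mulmx1 UU.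
have [uQ _] := mulmx1_unit QVU.
have -> : invmx Q = V^T *m U by apply: (can_inj (mulKmx uQ)); rewrite mulmxV.
by rewrite /Q /diag_family !trmx_mul !trmxK tr_diag_mx trmx_inv !mulmxA.
Qed.

Lemma joint_triangularizerP (U : 'M[R]_d) :
  joint_triangularizer M U <->
  orthogonal_mx U /\ exists s : 'S_d, is_trig_mx (U^T *m (invmx V)^T *m perm_mx s).
Proof.
suff trigP : orthogonal_mx U -> (forall k, low (U^T *m M k *m U) = 0) <->
    exists s : 'S_d, is_trig_mx (U^T *m (invmx V)^T *m perm_mx s).
  by split=> -[UU trigU]; split=> //; apply/trigP.
move=> UU; have [_ uU] := mulmx1_unit UU.
have uQ : U^T *m (invmx V)^T \in unitmx by rewrite unitmx_mul !unitmx_tr unitmx_inv uU uV.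
split=> [trigU | [s trigU] k].
  apply: (@trig_conj_diag_perm _ _ _ (fun k => \row_i Lambda k i)) uQ _ => [i j | k].
    by case/Lambda_sep => k; exists k; rewrite !mxE.
  by rewrite -tr_conj_diag_family //; apply/lowP.
by apply/lowP; rewrite tr_conj_diag_family //; apply: perm_trig_conj_diag uQ trigU.
Qed.

Lemma joint_triangularizer_param :
  exists2 F : 'S_d * {ffun 'I_d -> bool} -> 'M[R]_d, injective F &
    forall U, joint_triangularizer M U <-> exists p, U = F p.
Proof.
pose X (s : 'S_d) := (invmx V)^T *m perm_mx s.
have uX s : X s \in unitmx by rewrite /X unitmx_mul unitmx_tr unitmx_inv uV unitmx_perm.
have [U0 U0P] := fin_all_exists (fun s => orthogonal_trig_exists (uX s)).
have adaptedP s U : orthogonal_mx U /\ is_trig_mx (U^T *m X s) <->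
    exists sg, U = U0 s *m sign_mx sg.
  by case: (U0P s) => U0U0 trigU0; apply: orthogonal_trig_signP.
pose F (p : 'S_d * {ffun 'I_d -> bool}) := U0 p.1 *m sign_mx p.2.
have F_adapted p : orthogonal_mx (F p) /\ is_trig_mx ((F p)^T *m X p.1).
  by apply/adaptedP; exists p.2.
exists F => [[s sg] [t tg] eqF | U].
  have [FF trig_s] := F_adapted (s, sg); have [_ trig_t] := F_adapted (t, tg).
  rewrite -eqF in trig_t; have [_ uF] := mulmx1_unit FF.
  have uB : (F (s, sg))^T *m (invmx V)^T \in unitmx.
    by rewrite unitmx_mul !unitmx_tr unitmx_inv uF uV.
  have est : s = t by apply: (trig_mulmx_perm_inj uB); rewrite -mulmxA.
  subst t; congr pair; apply: sign_mx_inj.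
  have [_ uU0] := mulmx1_unit (U0P s).1.
  exact: (can_inj (mulKmx uU0)).
rewrite joint_triangularizerP; split=> [[UU [s trigU]] | [[s sg] ->]].
  have /(adaptedP s)[sg ->] : orthogonal_mx U /\ is_trig_mx (U^T *m X s).
    by rewrite /X mulmxA.
  by exists (s, sg).
have [FF trigF] := F_adapted (s, sg); split=> //.
by exists s; rewrite -mulmxA.
Qed.

End JointTriangularizers.

Theorem lemma1 (R : realType) (d N : nat) (hd : (0 < d)%N) (hN : (0 < N)%N)
    (V : 'M[R]_d) (hV : V \in unitmx) (Lambda : 'I_N -> 'I_d -> R)
    (hsep : forall i i' : 'I_d, i != i' -> exists n : 'I_N, Lambda n i != Lambda n i') :
  exists s : seq 'M[R]_d,
    [/\ uniq s, size s = (2 ^ d * d`!)%N &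
        forall U : 'M[R]_d, joint_triangularizer (diag_family V Lambda) U <-> U \in s].
Proof.
have [F F_inj FP] := joint_triangularizer_param hV hsep.
exists [seq F p | p <- enum {: 'S_d * {ffun 'I_d -> bool}}]; split.
- by rewrite map_inj_uniq ?enum_uniq.
- by rewrite size_map -cardE card_prod card_Sn card_ffun card_bool card_ord mulnC.
- move=> U; rewrite FP; split=> [[p ->] | /mapP[p _ ->]]; last by exists p.
  by rewrite map_f ?mem_enum.
Qed.
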